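(* Let $\boldsymbol X \in \mathbb{R}^{n\times d}$, $\boldsymbol y \in \mathbb{R}^n$, $\boldsymbol M = \boldsymbol X^\top \boldsymbol X$, $\boldsymbol r = \boldsymbol X^\top \boldsymbol y$. Assume (A1) $\boldsymbol r > \mathbf 0$ and (A2) $M_{ij}\le 0$ for all $i\neq j$. Then $\boldsymbol M$ is positive definite; in particular $n\ge d$.
   Context: $\boldsymbol r>\mathbf 0$ means every coordinate of $\boldsymbol r$ is positive. *)

From HB Require Import structures.
From mathcomp Require Import all_boot all_order all_algebra.
Set Implicit Arguments. Unset Strict Implicit. Unset Printing Implicit Defensive.
Import Order.TTheory GRing.Theory Num.Theory.
Local Open Scope ring_scope.

Definition posdef (R : realFieldType) (d : nat) (M : 'M[R]_d) : Prop :=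
  forall v : 'cV[R]_d, v != 0 -> 0 < ((v^T *m M *m v) 0 0).

From HB Require Import structures.
From mathcomp Require Import all_boot all_order all_algebra.
Set Implicit Arguments.
Unset Strict Implicit.
Unset Printing Implicit Defensive.
Import Order.TTheory GRing.Theory Num.Theory.
Local Open Scope ring_scope.

(* Let G = X^T X and |v| the entrywise absolute value of v.  Since the
   off-diagonal entries of G are nonpositive, |v|^T G |v| <= v^T G v.  Moreover
   |v|^T G |v| = ||X |v|||^2, and X |v| <> 0 for v <> 0 because
   (X |v|)^T y = |v|^T r > 0 when r > 0.  Hence G is positive definite, so X^T
   has trivial left kernel, i.e. rank X = d, which forces d <= n. *)

Definition qform {R : pzRingType} {d : nat} (M : 'M[R]_d) (v : 'cV[R]_d) : R :=
  (v^T *m M *m v) 0 0.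

Lemma qformE (R : comPzRingType) (d : nat) (M : 'M[R]_d) (v : 'cV[R]_d) :
  qform M v = \sum_j \sum_i v i 0 * M i j * v j 0.
Proof.
rewrite /qform mxE; apply: eq_bigr => j _; rewrite mxE mulr_suml.
by apply: eq_bigr => i _; rewrite mxE.
Qed.

Lemma qform_gram (R : comPzRingType) (n d : nat) (X : 'M[R]_(n, d)) (v : 'cV[R]_d) :
  qform (X^T *m X) v = \sum_k (X *m v) k 0 ^+ 2.
Proof.
rewrite /qform mulmxA -trmx_mul -mulmxA mxE.
by apply: eq_bigr => k _; rewrite mxE expr2.
Qed.

Lemma qform_gram_gt0 (R : realDomainType) (n d : nat) (X : 'M[R]_(n, d))
    (v : 'cV[R]_d) :
  X *m v != 0 -> 0 < qform (X^T *m X) v.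
Proof.
move=> Xv0; rewrite lt_def qform_gram sumr_ge0 ?andbT => [|k _]; last exact: sqr_ge0.
apply: contra Xv0 => /eqP/psumr_eq0P sq0; apply/eqP/matrixP => k j.
rewrite (ord1 j) [RHS]mxE; apply/eqP.
by rewrite -sqrf_eq0 sq0 // => i _; exact: sqr_ge0.
Qed.

Lemma map_mx_norm_eq0 (R : numDomainType) (m n : nat) (A : 'M[R]_(m, n)) :
  (map_mx Num.norm A == 0) = (A == 0).
Proof.
apply/eqP/eqP => [/matrixP A0 | ->]; last by apply/matrixP => i j; rewrite !mxE normr0.
by apply/matrixP => i j; have /eqP := A0 i j; rewrite !mxE normr_eq0 => /eqP.
Qed.

Lemma qform_norm_le (R : realDomainType) (d : nat) (M : 'M[R]_d) (v : 'cV[R]_d) :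
  (forall i j, i != j -> M i j <= 0) -> qform M (map_mx Num.norm v) <= qform M v.
Proof.
move=> offdiag_le0; rewrite !qformE.
apply: ler_sum => j _; apply: ler_sum => i _; rewrite !mxE.
rewrite mulrAC [v i 0 * _ * _]mulrAC -!normrM.
have [-> | ij] := eqVneq i j; first by rewrite normrM -expr2 real_normK ?num_real.
by rewrite !(mulrC _ (M i j)) ler_wnM2l ?offdiag_le0 ?ler_norm.
Qed.

Lemma dot_nneg_pos_gt0 (R : numDomainType) (d : nat) (u r : 'cV[R]_d) :
    (forall i, 0 <= u i 0) -> (forall i, 0 < r i 0) -> u != 0 ->
  0 < (u^T *m r) 0 0.
Proof.
move=> u_ge0 r_gt0 u0.
have [i ui0] : exists i, u i 0 != 0.
  apply/existsP; apply: contraNT u0; rewrite negb_exists => /forallP ui0.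
  by apply/eqP/matrixP => i j; rewrite (ord1 j) mxE; apply/eqP/negPn/ui0.
rewrite mxE (bigD1 i) //= ltr_pwDl //.
- by rewrite !mxE mulr_gt0 // lt_def ui0; apply: u_ge0.
- by apply: sumr_ge0 => k _; rewrite !mxE (mulr_ge0 (u_ge0 k) (ltW (r_gt0 k))).
Qed.

Lemma posdef_gram_leq (R : realFieldType) (n d : nat) (X : 'M[R]_(n, d)) :
  posdef (X^T *m X) -> (d <= n)%N.
Proof.
move=> pdX; apply: leq_trans (rank_leq_col X^T); rewrite row_leq_rank.
apply: inj_row_free => w wX0; apply/eqP; apply: contraT => w0.
have := pdX w^T; rewrite trmx_eq0 => /(_ w0).
by rewrite trmxK mulmxA wX0 !mul0mx mxE ltxx.
Qed.

Theorem proposition1 (R : realFieldType) (n d : nat)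
  (X : 'M[R]_(n, d)) (y : 'cV[R]_n)
  (A1 : forall i : 'I_d, 0 < (X^T *m y) i 0)
  (A2 : forall i j : 'I_d, i != j -> (X^T *m X) i j <= 0) :
  posdef (X^T *m X) /\ (d <= n)%N.
Proof.
suff pdG : posdef (X^T *m X) by split=> //; exact: posdef_gram_leq pdG.
move=> v v0; rewrite -/(qform _ v); set u := map_mx Num.norm v.
apply: lt_le_trans (qform_norm_le v A2); apply: qform_gram_gt0.
have : 0 < (u^T *m (X^T *m y)) 0 0.
  by apply: dot_nneg_pos_gt0; rewrite ?map_mx_norm_eq0 // => i; rewrite mxE.
apply: contraTneq => Xu0.
by rewrite mulmxA -trmx_mul Xu0 trmx0 mul0mx mxE ltxx.
Qed.
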